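(* Let $X$ be a $G$-space with $\mathrm{TC}^{G,\infty}(X)=0$. Then the orbit map $\rho_X\colon X\to X/G$ is nullhomotopic.
   Context: All spaces are well-pointed CW complexes, $G$ a topological group acting cellularly. $PX$ is the path space; $\mathcal{P}_k(X)=\{(\gamma_1,\dots,\gamma_k)\in(PX)^k\mid G\gamma_i(1)=G\gamma_{i+1}(0),\ 1\le i\le k-1\}$, $\pi_k\colon\mathcal{P}_k(X)\to X\times X$, $\pi_k(\gamma_1,\dots,\gamma_k)=(\gamma_1(0),\gamma_k(1))$. $\mathrm{secat}(f)$ (reduced) is the least $n\ge 0$ such that the base has an open cover $U_0,\dots,U_n$ admitting maps $s_i$ with $f\circ s_i\simeq$ inclusion. $\mathrm{TC}^{G,k}(X)=\mathrm{secat}(\pi_k)$, $\mathrm{TC}^{G,\infty}(X)=\min_k\mathrm{TC}^{G,k}(X)$. *)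

From HB Require Import structures.
From mathcomp Require Import all_boot all_order all_algebra generic_quotient.
From mathcomp Require Import all_classical all_reals topology.
From mathcomp Require Import Rstruct Rstruct_topology.
From Stdlib Require Import Rdefinitions.

Import Order.TTheory GRing.Theory Num.Theory.

Set Implicit Arguments.
Unset Strict Implicit.
Unset Printing Implicit Defensive.

Local Open Scope classical_set_scope.
Local Open Scope quotient_scope.

HB.mixin Record Group_isTopological (G : Type) of Group G & Topological G := {
  mulg_continuous : continuous (fun p : G * G => (p.1 * p.2)%g);
  invg_continuous : continuous (fun g : G => (g^-1)%g)
}.

#[short(type="topGroupType")]
HB.structure Definition TopologicalGroup :=
  {G of Group_isTopological G & Group G & Topological G}.

Record gaction (G : topGroupType) (X : topologicalType) := GAction {
  act : G -> X -> X;
  act_continuous : continuous (fun p : G * X => act p.1 p.2);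
  act1 : forall x, act 1%g x = x;
  actM : forall g h x, act (g * h)%g x = act g (act h x)
}.

Definition same_orbit G X (A : @gaction G X) (x y : X) : Prop :=
  exists g : G, act A g x = y.

Definition orbit_rel G X (A : @gaction G X) : rel X :=
  fun x y => `[< same_orbit A x y >].

Lemma orbit_rel_refl G X (A : @gaction G X) : reflexive (orbit_rel A).
Proof. by move=> x; apply/asboolP; exists 1%g; rewrite act1. Qed.

Lemma orbit_rel_sym G X (A : @gaction G X) : symmetric (orbit_rel A).
Proof.
have H : forall x y, orbit_rel A x y -> orbit_rel A y x.
  move=> x y /asboolP [g <-]; apply/asboolP; exists (g^-1)%g.
  by rewrite -actM mulVg act1.
by move=> x y; apply/idP/idP => /H.
Qed.

Lemma orbit_rel_trans G X (A : @gaction G X) : transitive (orbit_rel A).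
Proof.
move=> y x z /asboolP [g <-] /asboolP [h <-]; apply/asboolP.
by exists (h * g)%g; rewrite actM.
Qed.

Definition orbit_equiv G X (A : @gaction G X) : equiv_rel X :=
  EquivRel (orbit_rel A) (@orbit_rel_refl G X A) (@orbit_rel_sym G X A)
    (@orbit_rel_trans G X A).

Definition orbit_space G X (A : @gaction G X) : topologicalType :=
  quotient_topology {eq_quot (orbit_equiv A)}.

Definition orbit_map G X (A : @gaction G X) : X -> orbit_space A :=
  \pi_(orbit_space A).

Definition unit_interval : Type := set_type (`[0%R, 1%R]%classic : set R).

Lemma unit_interval0_subproof : (0%R : R) \in (`[0%R, 1%R]%classic : set R).
Proof. by rewrite inE /= in_itv /= lexx ler01. Qed.

Lemma unit_interval1_subproof : (1%R : R) \in (`[0%R, 1%R]%classic : set R).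
Proof. by rewrite inE /= in_itv /= lexx ler01. Qed.

Definition I0 : unit_interval := exist _ 0%R unit_interval0_subproof.
Definition I1 : unit_interval := exist _ 1%R unit_interval1_subproof.

Definition homotopic (A B : topologicalType) (f g : A -> B) : Prop :=
  exists H : A * unit_interval -> B,
    [/\ continuous H, forall a, H (a, I0) = f a & forall a, H (a, I1) = g a].

Definition nullhomotopic (A B : topologicalType) (f : A -> B) : Prop :=
  exists b : B, homotopic f (fun _ => b).

Definition path_space (X : topologicalType) : topologicalType :=
  @initial_topology (continuousType unit_interval X)
    {compact-open, unit_interval -> X} id.

Definition path_tuples (X : topologicalType) (k : nat) : topologicalType :=
  prod_topology (fun _ : 'I_k => path_space X).

Definition Pk_set G X (A : @gaction G X) (k : nat) : set (path_tuples X k) :=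
  [set γ | forall i j : 'I_k, nat_of_ord j = (nat_of_ord i).+1 ->
      same_orbit A ((γ i : continuousType unit_interval X) I1)
                   ((γ j : continuousType unit_interval X) I0)].

Definition Pk G X (A : @gaction G X) (k : nat) : topologicalType :=
  set_type (@Pk_set G X A k).

Arguments Pk_set {G X} A k _.

(** π_k : P_k(X) -> X × X, for k = n.+1 >= 1 *)
Definition pik G X (A : @gaction G X) (n : nat) : Pk A n.+1 -> X * X :=
  fun γ => (((set_val γ) ord0 : continuousType unit_interval X) I0,
            ((set_val γ) ord_max : continuousType unit_interval X) I1).

Arguments pik {G X} A n _.

Definition secat_le (E B : topologicalType) (f : E -> B) (n : nat) : Prop :=
  exists U : 'I_n.+1 -> set B,
    [/\ forall i, open (U i),
        \bigcup_i U i = setT &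
        forall i, exists s : set_type (U i) -> E,
          continuous s /\ homotopic (f \o s) (@set_val B (U i))].

Definition secat_eq (E B : topologicalType) (f : E -> B) (n : nat) : Prop :=
  secat_le f n /\ forall m, secat_le f m -> (n <= m)%N.

Definition TCG_eq G X (A : @gaction G X) (k n : nat) : Prop :=
  exists k', k = k'.+1 /\ secat_eq (@pik G X A k') n.

Definition TCGinf_eq G X (A : @gaction G X) (n : nat) : Prop :=
  (exists k, TCG_eq A k n) /\ forall k m, TCG_eq A k m -> (n <= m)%N.

From HB Require Import structures.
From mathcomp Require Import all_boot all_order all_algebra generic_quotient.
From mathcomp Require Import all_classical all_reals topology.
From mathcomp Require Import Rstruct Rstruct_topology normedtype.
From Stdlib Require Import Rdefinitions.
Import Order.TTheory GRing.Theory Num.Theory.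
Local Open Scope classical_set_scope.
Local Open Scope ring_scope.

(* Since TC^{G,∞}(X) = 0, some π_k has a global homotopy section s : X × X -> P_k(X).
   Fixing x0, the tuple s(x0, x) = (γ_1, ..., γ_k) depends continuously on x; each γ_i
   is a homotopy from γ_i(0) to γ_i(1), and after the orbit map the end of γ_i agrees
   with the start of γ_{i+1}.  Concatenating, ρ ∘ γ_1(0) ≃ ρ ∘ γ_k(1), while the section
   property gives γ_1(0) ≃ x0 and γ_k(1) ≃ x as functions of x.  Hence ρ ≃ const. *)

Lemma continuous_pair {T U V : topologicalType} (f : T -> U) (g : T -> V) :
  continuous f -> continuous g -> continuous (fun x => (f x, g x)).
Proof. by move=> cf cg x; apply: cvg_pair; [exact: cf | exact: cg]. Qed.

Lemma continuous_fst {U V : topologicalType} : continuous (@fst U V).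
Proof. by move=> x; exact: cvg_fst. Qed.

Lemma continuous_snd {U V : topologicalType} : continuous (@snd U V).
Proof. by move=> x; exact: cvg_snd. Qed.

Lemma continuous_comp_fun {T U V : topologicalType} {f : T -> U} {g : U -> V} :
  continuous f -> continuous g -> continuous (g \o f).
Proof. by move=> cf cg x; apply: continuous_comp; [exact: cf | exact: cg]. Qed.

Lemma unit_interval_val_continuous :
  continuous (set_val : unit_interval -> R).
Proof. exact: initial_continuous. Qed.

Lemma val_I0 : set_val I0 = 0. Proof. by []. Qed.

Lemma val_I1 : set_val I1 = 1. Proof. by []. Qed.

Lemma unit_interval_bounds (t : unit_interval) : 0 <= set_val t <= 1.
Proof. by have := set_valP t; rewrite /= in_itv. Qed.

Lemma unit_interval_inj (s t : unit_interval) : set_val s = set_val t -> s = t.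
Proof. by move=> st; apply: eq_sig_hprop => // *; exact: Prop_irrelevance. Qed.

Lemma clamp01_in (r : R) :
  Num.min (Num.max r 0) 1 \in (`[0%R, 1%R]%classic : set R).
Proof.
rewrite inE /= in_itv /= ge_min lexx orbT andbT.
by rewrite le_min ler01 le_max lexx orbT.
Qed.

Definition clampI (r : R) : unit_interval :=
  exist _ (Num.min (Num.max r 0) 1) (clamp01_in r).
(* Arguments of type R default to Stdlib's R_scope (Rplus, Rmult); the lemmas
   below are stated with the ring operations. *)
Arguments clampI r%_ring_scope.

Lemma clampI_val (r : R) : set_val (clampI r) = Num.min (Num.max r 0) 1.
Proof. by []. Qed.

Lemma clampI_continuous : continuous clampI.
Proof.
apply: continuous_comp_initial => x.
apply: (@continuous_min _ _ (fun r : R => Num.max r 0) (fun=> 1)); last exact: cvg_cst.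
by apply: continuous_max => //; exact: cvg_cst.
Qed.

Lemma clampI_id (r : R) (t : unit_interval) : r = set_val t -> clampI r = t.
Proof.
move=> ->; apply: unit_interval_inj.
case/andP: (unit_interval_bounds t) => t0 t1.
by rewrite clampI_val (max_idPl t0) (min_idPl t1).
Qed.

Lemma unit_interval_compact : compact [set: unit_interval].
Proof.
have -> : [set: unit_interval] = clampI @` `[0%R, 1%R].
  apply/seteqP; split => // t _; exists (set_val t); last exact: clampI_id.
  by rewrite /= in_itv unit_interval_bounds.
apply: continuous_compact; last exact: segment_compact.
exact: continuous_subspaceT clampI_continuous.
Qed.

Lemma unit_interval_locally_compact : locally_compact [set: unit_interval].
Proof.
move=> x _; rewrite withinET; exists setT; first exact: filterT.
by split; [exact: unit_interval_compact | exact: closedT].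
Qed.

Definition rescaleI (a b : R) (t : unit_interval) : unit_interval :=
  clampI (a * set_val t + b).
Arguments rescaleI (a b)%_ring_scope t.

Lemma rescaleI_continuous (a b : R) : continuous (rescaleI a b).
Proof.
apply: (@continuous_comp_fun _ _ _ (fun t => a * set_val t + b) clampI);
  last exact: clampI_continuous.
apply: (@continuous_comp_fun _ _ _ _ (fun r : R => a * r + b)
  unit_interval_val_continuous) => r.
exact: (@continuousD R R^o R (fun r => a * r) (fun=> b) r
  (@mulrl_continuous R a r) (@cvg_cst R^o b R (nbhs r) _)).
Qed.

Section Homotopy.
Context {T U : topologicalType}.
Implicit Types f g h : T -> U.

Lemma homotopic_comp {V : topologicalType} {k : U -> V} {f g} :
  continuous k -> homotopic f g -> homotopic (k \o f) (k \o g).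
Proof.
move=> ck [H [cH H0 H1]]; exists (k \o H); split => /= [|a|a].
- exact: continuous_comp_fun.
- by rewrite H0.
- by rewrite H1.
Qed.

Lemma homotopic_precomp {S : topologicalType} {k : S -> T} {f g} :
  continuous k -> homotopic f g -> homotopic (f \o k) (g \o k).
Proof.
move=> ck [H [cH H0 H1]]; exists (H \o (fun p => (k p.1, p.2))).
split => [|a|a]; [|exact: H0|exact: H1].
apply: continuous_comp_fun cH; apply: continuous_pair continuous_snd.
exact: continuous_comp_fun continuous_fst ck.
Qed.

Lemma homotopy_rescale_continuous (H : T * unit_interval -> U) (a b : R) :
  continuous H -> continuous (fun p => H (p.1, rescaleI a b p.2)).
Proof.
move=> cH; apply: (continuous_comp_fun _ cH).
apply: continuous_pair continuous_fst _.
exact: continuous_comp_fun continuous_snd (rescaleI_continuous a b).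
Qed.

Lemma homotopic_sym {f g} : homotopic f g -> homotopic g f.
Proof.
move=> [H [cH H0 H1]]; exists (fun p => H (p.1, rescaleI (-1) 1 p.2)).
split => [|a|a]; first exact: homotopy_rescale_continuous.
- by rewrite -H1 /rescaleI (@clampI_id _ I1) // val_I0 val_I1 mulr0 add0r.
- by rewrite -H0 /rescaleI (@clampI_id _ I0) // val_I0 val_I1 mulr1 addNr.
Qed.

Lemma closed_time_le (c : R) :
  closed [set p : T * unit_interval | set_val p.2 <= c].
Proof.
apply: (preimage_closed _ (@closed_le R c)) => p _.
exact: continuous_comp_fun continuous_snd unit_interval_val_continuous p.
Qed.

Lemma closed_time_ge (c : R) :
  closed [set p : T * unit_interval | c <= set_val p.2].
Proof.
apply: (preimage_closed _ (@closed_ge R c)) => p _.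
exact: continuous_comp_fun continuous_snd unit_interval_val_continuous p.
Qed.

Definition concat_homotopy (H1 H2 : T * unit_interval -> U)
    (p : T * unit_interval) : U :=
  if set_val p.2 <= 2^-1 then H1 (p.1, rescaleI 2 0 p.2)
  else H2 (p.1, rescaleI 2 (-1) p.2).

Lemma homotopic_trans {f g h} : homotopic f g -> homotopic g h -> homotopic f h.
Proof.
move=> [H1 [cH1 H10 H11]] [H2 [cH2 H20 H21]].
exists (concat_homotopy H1 H2); split => [|a|a]; last first.
- rewrite /concat_homotopy val_I1 ifN; last by rewrite -ltNge invf_lt1 ?ltr1n.
  by rewrite /rescaleI (@clampI_id _ I1) ?val_I1 ?mulr1 ?addrK.
- rewrite /concat_homotopy val_I0 ifT ?invr_ge0 ?ler0n //.
  by rewrite /rescaleI (@clampI_id _ I0) ?val_I0 ?mulr0 ?addr0.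
apply/continuous_subspace_setT.
have -> : [set: T * unit_interval] =
    [set p | set_val p.2 <= 2^-1] `|` [set p | 2^-1 <= set_val p.2].
  by apply/seteqP; split => // p _ /=; case: (leP (set_val p.2) 2^-1) => [|/ltW];
    [left | right].
apply: withinU_continuous; [exact: closed_time_le | exact: closed_time_ge | |].
- apply: (@subspace_eq_continuous _ _ _ (fun p => H1 (p.1, rescaleI 2 0 p.2)));
    last exact/continuous_subspaceT/homotopy_rescale_continuous.
  move=> p; rewrite inE /= => le_half.
  by rewrite /from_subspace /concat_homotopy ifT.
apply: (@subspace_eq_continuous _ _ _ (fun p => H2 (p.1, rescaleI 2 (-1) p.2)));
  last exact/continuous_subspaceT/homotopy_rescale_continuous.
move=> p; rewrite inE /= => ge_half; rewrite /from_subspace /concat_homotopy.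
case: ifPn => // le_half.
have p2_half : set_val p.2 = 2^-1 by apply/eqP; rewrite eq_le le_half ge_half.
have two_half : 2 * 2^-1 = 1 :> R by rewrite mulfV // pnatr_eq0.
rewrite /rescaleI p2_half two_half addr0 (@clampI_id 1 I1) // addrN.
by rewrite (@clampI_id 0 I0) // H11 H20.
Qed.

End Homotopy.

Section PathSpace.
Context {X : topologicalType}.
Import ArrowAsCompactOpen.

Lemma path_space_eval_continuous :
  continuous (fun p : path_space X * unit_interval =>
    (p.1 : continuousType unit_interval X) p.2).
Proof.
have -> : (fun p : path_space X * unit_interval =>
  (p.1 : continuousType unit_interval X) p.2) = eval by apply/funext => -[].
exact (@eval_continuous unit_interval X
  unit_interval_locally_compact uniform_regular).
Qed.

Definition path_start (γ : path_space X) : X :=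
  (γ : continuousType unit_interval X) I0.

Definition path_end (γ : path_space X) : X :=
  (γ : continuousType unit_interval X) I1.

Lemma homotopic_path_ends {T : topologicalType} {γ : T -> path_space X} :
  continuous γ -> homotopic (path_start \o γ) (path_end \o γ).
Proof.
move=> cγ; exists (fun p => (γ p.1 : continuousType unit_interval X) p.2).
split => //; apply: (@continuous_comp_fun _ _ _ (fun p => (γ p.1, p.2)) _ _
  path_space_eval_continuous).
exact: continuous_pair (continuous_comp_fun continuous_fst cγ) continuous_snd.
Qed.

Lemma homotopic_path_chain {T Y : topologicalType} {q : X -> Y} {n}
    {γ : 'I_n.+1 -> T -> path_space X} :
  continuous q -> (forall i, continuous (γ i)) ->
  (forall (i j : 'I_n.+1) t, j = i.+1 :> nat ->
     q (path_end (γ i t)) = q (path_start (γ j t))) ->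
  homotopic (q \o path_start \o γ ord0) (q \o path_end \o γ ord_max).
Proof.
move=> cq cγ link.
suff chain m (lt_mn : (m < n.+1)%nat) :
    homotopic (q \o path_start \o γ ord0) (q \o path_end \o γ (Ordinal lt_mn)).
  by rewrite (_ : ord_max = Ordinal (ltnSn n)); [exact: chain | exact: val_inj].
elim: m lt_mn => [|m IHm] lt_mn.
  rewrite (_ : Ordinal lt_mn = ord0); last exact: val_inj.
  exact (homotopic_comp cq (homotopic_path_ends (cγ ord0))).
apply: homotopic_trans (IHm (ltnW lt_mn)) _.
rewrite (_ : _ \o γ (Ordinal (ltnW lt_mn)) = q \o path_start \o γ (Ordinal lt_mn)).
  exact (homotopic_comp cq (homotopic_path_ends (cγ _))).
by apply/funext => t /=; rewrite (link _ (Ordinal lt_mn)).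
Qed.

End PathSpace.

Lemma secat_le0_section (E B : topologicalType) (f : E -> B) :
  secat_le f 0 -> exists s : B -> E, continuous s /\ homotopic (f \o s) id.
Proof.
move=> [U [_ covU sU]]; have [s [cs fs_incl]] := sU ord0.
have U0T b : U ord0 b.
  have : (\bigcup_i U i) b by rewrite covU.
  by case=> i _; rewrite (ord1 i).
pose incl b : set_type (U ord0) := exist _ b (mem_set (U0T b)).
have cincl : continuous incl by apply: continuous_comp_initial => b; exact: cvg_id.
exists (s \o incl); split; first exact: continuous_comp_fun.
exact: homotopic_precomp cincl fs_incl.
Qed.

Section OrbitPaths.
Context {G : topGroupType} {X : topologicalType} (A : gaction G X).

Lemma Pk_path_continuous {k} (i : 'I_k) :
  continuous (fun γ : Pk A k => set_val γ i).
Proof.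
exact: (@continuous_comp_fun _ _ _ (@set_val _ (Pk_set A k)) _
  (@initial_continuous _ _ _) (@proj_continuous _ (fun=> path_space X) i)).
Qed.

Lemma Pk_orbit_link {k} (γ : Pk A k) (i j : 'I_k) : j = i.+1 :> nat ->
  orbit_map A (path_end (set_val γ i)) = orbit_map A (path_start (set_val γ j)).
Proof.
by move=> ji; have [g gij] := set_valP γ i j ji; apply/eqquotP/asboolP; exists g.
Qed.

End OrbitPaths.

Theorem mainTheorem6 (G : topGroupType) (X : topologicalType)
    (A : gaction G X) (x0 : X) :
  TCGinf_eq A 0 -> nullhomotopic (orbit_map A).
Proof.
move=> [[_ [k [_ [/secat_le0_section [s [cs pik_s]] _]]]] _].
pose rho := orbit_map A.
have c_rho : continuous rho by exact: pi_continuous.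
have c_x0 : continuous (fun x : X => (x0, x)).
  exact: (@continuous_pair _ _ _ (fun=> x0) id
    (fun x => @cst_continuous _ _ x0 x) (fun x => @cvg_id _ (nbhs x))).
pose γ i (x : X) : path_space X := set_val (s (x0, x)) i.
have cγ i : continuous (γ i).
  exact (continuous_comp_fun (continuous_comp_fun c_x0 cs)
    (Pk_path_continuous A i)).
have chain := homotopic_path_chain c_rho cγ
  (fun i j x => Pk_orbit_link A (s (x0, x)) i j).
have pik_s_x0 := homotopic_precomp c_x0 pik_s.
have start_x0 : homotopic (rho \o path_start \o γ ord0) (fun=> rho x0).
  exact (homotopic_comp (continuous_comp_fun continuous_fst c_rho) pik_s_x0).
have end_id : homotopic (rho \o path_end \o γ ord_max) rho.
  exact (homotopic_comp (continuous_comp_fun continuous_snd c_rho) pik_s_x0).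
exists (rho x0).
exact (homotopic_trans (homotopic_sym end_id)
  (homotopic_trans (homotopic_sym chain) start_x0)).
Qed.
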